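(* Let $Q=\{\rho=0\}$ with $\rho(x_1,x_2,x_3)=x_1^2+x_2^2+x_3^2-2(x_1x_2+x_2x_3+x_3x_1)$, and $\mathcal U=\{[x]\in\mathbb{RP}^2:\rho(x)<0\}$. Then: (1) $f(a_j)=Q$ for each $a_j\in\mathcal I(f)$; (2) $f(p)=p$ for every $p\in Q\setminus\mathcal I(f)$; (3) for every $p\in\mathbb{P}^2\setminus(A_1\cup A_2\cup A_3)$, $p\in\mathcal U$ if and only if $f(p)\in\mathcal U$.
   Context: $g[x_1:x_2:x_3]=[x_1^2:x_2^2:x_3^2]$, $h[x_1:x_2:x_3]=[x_1(-x_1+x_2+x_3):x_2(x_1-x_2+x_3):x_3(x_1+x_2-x_3)]$, $f=g\circ h$. $\mathcal I(f)=\{a_1,a_2,a_3\}$ with $a_1=[0:1:1]$, $a_2=[1:0:1]$, $a_3=[1:1:0]$, and $A_i$ is the line through $\{a_1,a_2,a_3\}\setminus\{a_i\}$. For $p\in\mathcal I(f)$, $f(p)$ denotes the set of all limits $\lim f(p_j)$ with $p_j\to p$, $p_j\notin\mathcal I(f)$. ($\rho(x)<0$ is well defined on $\mathbb{RP}^2$ since $\rho$ is homogeneous of even degree; $\mathcal U$ is the open disk in $\mathbb{RP}^2$ bounded by $Q\cap\mathbb{RP}^2$, which is tangent to the lines $x_j=0$ at the points of $\mathcal I(f)$.) *)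

From Stdlib Require Import Reals.
Open Scope R_scope.

Record CC := mkC { Re : R; Im : R }.
Definition C0 : CC := mkC 0 0.
Definition C1 : CC := mkC 1 0.
Definition RtoC (r : R) : CC := mkC r 0.
Definition Cadd (z w : CC) : CC := mkC (Re z + Re w) (Im z + Im w).
Definition Copp (z : CC) : CC := mkC (- Re z) (- Im z).
Definition Csub (z w : CC) : CC := Cadd z (Copp w).
Definition Cmul (z w : CC) : CC :=
  mkC (Re z * Re w - Im z * Im w) (Re z * Im w + Im z * Re w).

Definition Ccv (s : nat -> CC) (z : CC) : Prop :=
  Un_cv (fun n => Re (s n)) (Re z) /\ Un_cv (fun n => Im (s n)) (Im z).

Record V3 (K : Type) := mkV { v1 : K; v2 : K; v3 : K }.
Arguments mkV {K}. Arguments v1 {K}. Arguments v2 {K}. Arguments v3 {K}.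

Definition V0 : V3 CC := mkV C0 C0 C0.
Definition Cscale (c : CC) (x : V3 CC) : V3 CC :=
  mkV (Cmul c (v1 x)) (Cmul c (v2 x)) (Cmul c (v3 x)).
Definition RtoV (x : V3 R) : V3 CC := mkV (RtoC (v1 x)) (RtoC (v2 x)) (RtoC (v3 x)).

(** Points of P^2 = P^2(CC) are represented by nonzero vectors of CC^3;
    two nonzero vectors represent the same point iff they are proportional. *)
Definition proj_eq (x y : V3 CC) : Prop :=
  exists c : CC, c <> C0 /\ y = Cscale c x.

(** Convergence in P^2: [u n] -> [y] iff there are nonzero lifts converging
    to a nonzero representative of y (this is the quotient topology). *)
Definition V3cv (u : nat -> V3 CC) (y : V3 CC) : Prop :=
  Ccv (fun n => v1 (u n)) (v1 y) /\ Ccv (fun n => v2 (u n)) (v2 y) /\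
  Ccv (fun n => v3 (u n)) (v3 y).
Definition P2cv (u : nat -> V3 CC) (y : V3 CC) : Prop :=
  y <> V0 /\ (forall n, u n <> V0) /\
  exists c : nat -> CC, (forall n, c n <> C0) /\ V3cv (fun n => Cscale (c n) (u n)) y.

Definition gmap (x : V3 CC) : V3 CC :=
  mkV (Cmul (v1 x) (v1 x)) (Cmul (v2 x) (v2 x)) (Cmul (v3 x) (v3 x)).
Definition hmap (x : V3 CC) : V3 CC :=
  let x1 := v1 x in let x2 := v2 x in let x3 := v3 x in
  mkV (Cmul x1 (Cadd (Cadd (Copp x1) x2) x3))
      (Cmul x2 (Cadd (Csub x1 x2) x3))
      (Cmul x3 (Csub (Cadd x1 x2) x3)).
Definition fmap (x : V3 CC) : V3 CC := gmap (hmap x).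

Definition rhoC (x : V3 CC) : CC :=
  let x1 := v1 x in let x2 := v2 x in let x3 := v3 x in
  Csub (Cadd (Cadd (Cmul x1 x1) (Cmul x2 x2)) (Cmul x3 x3))
       (Cmul (RtoC 2) (Cadd (Cadd (Cmul x1 x2) (Cmul x2 x3)) (Cmul x3 x1))).
Definition rhoR (x : V3 R) : R :=
  let x1 := v1 x in let x2 := v2 x in let x3 := v3 x in
  x1 * x1 + x2 * x2 + x3 * x3 - 2 * (x1 * x2 + x2 * x3 + x3 * x1).

Definition inQ (p : V3 CC) : Prop := p <> V0 /\ rhoC p = C0.

(** U = {[x] in RP^2 : rho(x) < 0}, viewed inside P^2(CC): p is in U iff
    p is represented by a nonzero real vector x with rho(x) < 0. *)
Definition inU (p : V3 CC) : Prop :=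
  exists x : V3 R, x <> mkV 0 0 0 /\ proj_eq (RtoV x) p /\ rhoR x < 0.

Definition a1 : V3 CC := mkV C0 C1 C1.
Definition a2 : V3 CC := mkV C1 C0 C1.
Definition a3 : V3 CC := mkV C1 C1 C0.
Definition inI (p : V3 CC) : Prop := proj_eq a1 p \/ proj_eq a2 p \/ proj_eq a3 p.

Definition det3 (x u v : V3 CC) : CC :=
  Cadd (Csub (Cmul (v1 x) (Csub (Cmul (v2 u) (v3 v)) (Cmul (v3 u) (v2 v))))
             (Cmul (v2 x) (Csub (Cmul (v1 u) (v3 v)) (Cmul (v3 u) (v1 v)))))
       (Cmul (v3 x) (Csub (Cmul (v1 u) (v2 v)) (Cmul (v2 u) (v1 v)))).
Definition onLine (u v p : V3 CC) : Prop := det3 p u v = C0.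
Definition onA1 (p : V3 CC) : Prop := onLine a2 a3 p.
Definition onA2 (p : V3 CC) : Prop := onLine a1 a3 p.
Definition onA3 (p : V3 CC) : Prop := onLine a1 a2 p.

(** For p in I(f): f(p) = set of limits of f(p_j), p_j -> p, p_j not in I(f).
    [limit_set p y] says the point [y] belongs to f(p). *)
Definition limit_set (p y : V3 CC) : Prop :=
  exists u : nat -> V3 CC,
    (forall n, ~ inI (u n)) /\ P2cv u p /\ P2cv (fun n => fmap (u n)) y.

(* (1) A bihomogeneous relation between a point and its image under [f] survives rescaling and
   limits and forces [rho = 0] on limits at [a1].  Conversely every point of [Q] has the form
   [((B+C)^2, B^2, C^2)] and is the limit of [f] along the curve [(B+C, t+C, t+B)], [t -> oo];
   [a2] and [a3] follow by permuting coordinates.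
   (2) On [Q], [f(x) = 4 x1 x2 x3 x].
   (3) [rho(f x) = rho(x) (l1 l2 l3)(x)^2] for the linear factors [l_i] of [h], which gives one
   direction.  Conversely, if [f(p)] is real with [rho < 0], the coordinates of [h(p)] have
   real ratios, and [h (h x) = (l1 l2 l3)(x) x] shows that [p] itself is real. *)

From Stdlib Require Import Reals Lra Psatz Field Classical FunctionalExtensionality.
Open Scope R_scope.

Lemma CC_ext (z w : CC) : Re z = Re w -> Im z = Im w -> z = w.
Proof. destruct z, w; simpl; intros -> ->; reflexivity. Qed.

Ltac CC_componentwise := intros;
  repeat match goal with z : CC |- _ => destruct z end;
  apply CC_ext; unfold Cadd, Cmul, Copp, Csub, C0, C1, RtoC; simpl; ring.

Lemma CC_ring_theory : ring_theory C0 C1 Cadd Cmul Csub Copp (@eq CC).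
Proof. constructor; CC_componentwise. Qed.

Definition Cnorm2 (z : CC) : R := Re z * Re z + Im z * Im z.
Definition Cinv (z : CC) : CC := mkC (Re z / Cnorm2 z) (- Im z / Cnorm2 z).
Definition Cdiv (z w : CC) : CC := Cmul z (Cinv w).

Lemma C1_neq_C0 : C1 <> C0.
Proof. intro E; apply (f_equal Re) in E; simpl in E; lra. Qed.

Lemma Cnorm2_neq0 (z : CC) : z <> C0 -> Cnorm2 z <> 0.
Proof.
  destruct z as [a b]; unfold Cnorm2; simpl; intros Hz E; apply Hz.
  assert (a = 0) by nra; assert (b = 0) by nra; subst; reflexivity.
Qed.

Lemma CC_field_theory : field_theory C0 C1 Cadd Cmul Csub Copp Cdiv Cinv (@eq CC).
Proof.
  constructor.
  - exact CC_ring_theory.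
  - exact C1_neq_C0.
  - reflexivity.
  - intros z Hz; pose proof (Cnorm2_neq0 z Hz) as Hn.
    destruct z as [a b]; unfold Cnorm2 in Hn; simpl in Hn.
    apply CC_ext; unfold Cmul, Cinv, Cnorm2, C1; simpl; field; exact Hn.
Qed.

Add Field CC_field : CC_field_theory.

Lemma Cmul_eq0 (z w : CC) : Cmul z w = C0 -> z = C0 \/ w = C0.
Proof.
  intro E; destruct (classic (z = C0)) as [|Hz]; [now left | right].
  transitivity (Cmul (Cinv z) (Cmul z w)); [field; exact Hz | rewrite E; ring].
Qed.

Lemma Cmul_neq0 (z w : CC) : z <> C0 -> w <> C0 -> Cmul z w <> C0.
Proof. intros Hz Hw E; destruct (Cmul_eq0 _ _ E); auto. Qed.

Lemma Csq_eq0 (z : CC) : Cmul z z = C0 -> z = C0.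
Proof. intro E; now destruct (Cmul_eq0 _ _ E). Qed.

Lemma Cinv_neq0 (z : CC) : z <> C0 -> Cinv z <> C0.
Proof.
  intros Hz E; apply C1_neq_C0.
  transitivity (Cmul z (Cinv z)); [field; exact Hz | rewrite E; ring].
Qed.

Lemma Csub_eq0 (z w : CC) : Csub z w = C0 -> z = w.
Proof. intro E; transitivity (Cadd (Csub z w) w); [ring | rewrite E; ring]. Qed.

Lemma Cmul_reg_l (w z z' : CC) : w <> C0 -> Cmul w z = Cmul w z' -> z = z'.
Proof.
  intros Hw E; transitivity (Cmul (Cinv w) (Cmul w z)); [field; exact Hw|].
  rewrite E; field; exact Hw.
Qed.

Definition C2 : CC := Cadd C1 C1.
Definition C4 : CC := Cmul C2 C2.

Lemma RtoC_2 : RtoC 2 = C2.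
Proof. CC_componentwise. Qed.

Lemma C2_neq0 : C2 <> C0.
Proof. intro E; apply (f_equal Re) in E; simpl in E; lra. Qed.

Lemma C4_neq0 : C4 <> C0.
Proof. exact (Cmul_neq0 _ _ C2_neq0 C2_neq0). Qed.

Lemma RtoC_mul a b : RtoC (a * b) = Cmul (RtoC a) (RtoC b). Proof. CC_componentwise. Qed.

Lemma RtoC_inv a : a <> 0 -> Cinv (RtoC a) = RtoC (/ a).
Proof. intro Ha; apply CC_ext; unfold Cinv, Cnorm2, RtoC; simpl; field; exact Ha. Qed.

Lemma RtoC_neq0 a : a <> 0 -> RtoC a <> C0.
Proof. intros Ha E; apply Ha, (f_equal Re E). Qed.

Lemma Csqrt_exists (z : CC) : exists w, Cmul w w = z.
Proof.
  destruct z as [a b].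
  set (r := sqrt (a * a + b * b)).
  assert (Hr : r * r = a * a + b * b) by (apply sqrt_sqrt; nra).
  assert (Hr0 : 0 <= r) by apply sqrt_pos.
  set (X := sqrt ((r + a) / 2)); set (Y := sqrt ((r - a) / 2)).
  assert (HX : X * X = (r + a) / 2) by (apply sqrt_sqrt; nra).
  assert (HY : Y * Y = (r - a) / 2) by (apply sqrt_sqrt; nra).
  assert (HXY : (X * Y) * (X * Y) = (b / 2) * (b / 2)).
  { replace ((X * Y) * (X * Y)) with ((X * X) * (Y * Y)) by ring; rewrite HX, HY; nra. }
  assert (0 <= X * Y) by (apply Rmult_le_pos; apply sqrt_pos).
  destruct (Rle_or_lt 0 b) as [Hb | Hb].
  - exists (mkC X Y); apply CC_ext; simpl; [nra|].
    enough (X * Y = b / 2) by lra. apply Rsqr_inj; unfold Rsqr; nra.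
  - exists (mkC X (- Y)); apply CC_ext; simpl; [nra|].
    enough (X * Y = - (b / 2)) by lra. apply Rsqr_inj; unfold Rsqr; nra.
Qed.

Lemma Csq_pos_real (z : CC) (s : R) : 0 < s -> Cmul z z = RtoC s -> z = RtoC (Re z).
Proof.
  destruct z as [a b]; intros Hs E; unfold Cmul, RtoC in E; simpl in E.
  injection E as E1 E2; apply CC_ext; simpl; [reflexivity|].
  destruct (Rmult_integral a b) as [Ha | Hb]; [lra | subst; nra | exact Hb].
Qed.

Lemma Csq_ratio_real (z w c : CC) (a b : R) : w <> C0 -> 0 < a * b ->
  Cmul z z = Cmul c (RtoC a) -> Cmul w w = Cmul c (RtoC b) ->
  z = Cmul w (RtoC (Re (Cdiv z w))).
Proof.
  intros Hw Hab Ez Ew.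
  assert (Hb : b <> 0) by (intro; subst; lra).
  assert (Hc : c <> C0) by (intro; subst; apply Hw, Csq_eq0; rewrite Ew; ring).
  assert (Hsq : Cmul (Cdiv z w) (Cdiv z w) = RtoC (a / b)).
  { transitivity (Cdiv (Cmul z z) (Cmul w w)); [field; exact Hw|].
    rewrite Ez, Ew; unfold Rdiv; rewrite RtoC_mul, <- RtoC_inv by exact Hb.
    field; split; [now apply RtoC_neq0 | exact Hc]. }
  assert (Hpos : 0 < a / b).
  { replace (a / b) with (a * b / (b * b)) by (field; exact Hb).
    apply Rdiv_lt_0_compat; nra. }
  rewrite <- (Csq_pos_real _ _ Hpos Hsq); field; exact Hw.
Qed.

Lemma Un_cv_const (a : R) : Un_cv (fun _ => a) a.
Proof.
  intros e He; exists 0%nat; intros; unfold Rdist; rewrite Rminus_diag, Rabs_R0; exact He.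
Qed.

Lemma Ccv_const (z : CC) : Ccv (fun _ => z) z.
Proof. split; apply Un_cv_const. Qed.

Lemma Ccv_add s t a b : Ccv s a -> Ccv t b -> Ccv (fun n => Cadd (s n) (t n)) (Cadd a b).
Proof.
  intros [Hs1 Hs2] [Ht1 Ht2]; split; simpl.
  - exact (CV_plus (fun n => Re (s n)) (fun n => Re (t n)) _ _ Hs1 Ht1).
  - exact (CV_plus (fun n => Im (s n)) (fun n => Im (t n)) _ _ Hs2 Ht2).
Qed.

Lemma Ccv_opp s a : Ccv s a -> Ccv (fun n => Copp (s n)) (Copp a).
Proof.
  intros [Hs1 Hs2]; split; simpl.
  - exact (CV_opp (fun n => Re (s n)) _ Hs1).
  - exact (CV_opp (fun n => Im (s n)) _ Hs2).
Qed.

Lemma Ccv_sub s t a b : Ccv s a -> Ccv t b -> Ccv (fun n => Csub (s n) (t n)) (Csub a b).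
Proof. intros Hs Ht; exact (Ccv_add _ _ _ _ Hs (Ccv_opp _ _ Ht)). Qed.

Lemma Ccv_mul s t a b : Ccv s a -> Ccv t b -> Ccv (fun n => Cmul (s n) (t n)) (Cmul a b).
Proof.
  intros [Hs1 Hs2] [Ht1 Ht2]; split; simpl.
  - apply (CV_minus (fun n => Re (s n) * Re (t n)) (fun n => Im (s n) * Im (t n))).
    + exact (CV_mult (fun n => Re (s n)) (fun n => Re (t n)) _ _ Hs1 Ht1).
    + exact (CV_mult (fun n => Im (s n)) (fun n => Im (t n)) _ _ Hs2 Ht2).
  - apply (CV_plus (fun n => Re (s n) * Im (t n)) (fun n => Im (s n) * Re (t n))).
    + exact (CV_mult (fun n => Re (s n)) (fun n => Im (t n)) _ _ Hs1 Ht2).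
    + exact (CV_mult (fun n => Im (s n)) (fun n => Re (t n)) _ _ Hs2 Ht1).
Qed.

Lemma Ccv_eq_lim s a b : Ccv s a -> a = b -> Ccv s b.
Proof. now intros H <-. Qed.

Lemma Ccv_unique s a b : Ccv s a -> Ccv s b -> a = b.
Proof. intros [Ha1 Ha2] [Hb1 Hb2]; apply CC_ext; eapply UL_sequence; eauto. Qed.

Lemma Ccv_ext s t a : (forall n, s n = t n) -> Ccv t a -> Ccv s a.
Proof.
  intros E Ht; replace s with t by (apply functional_extensionality; intro; now rewrite E).
  exact Ht.
Qed.

Lemma Ccv_RtoC (u : nat -> R) (l : R) : Un_cv u l -> Ccv (fun n => RtoC (u n)) (RtoC l).
Proof. intro Hu; split; [exact Hu | exact (Un_cv_const 0)]. Qed.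

Ltac Ccv_compute := repeat first
  [ eassumption | apply Ccv_const | apply Ccv_add | apply Ccv_sub | apply Ccv_mul | apply Ccv_opp ].

(* [h = (x1 l1, x2 l2, x3 l3)], and [l_i] vanishes exactly on the line [A_i]. *)
Definition l1C (x : V3 CC) : CC := Cadd (Cadd (Copp (v1 x)) (v2 x)) (v3 x).
Definition l2C (x : V3 CC) : CC := Cadd (Csub (v1 x) (v2 x)) (v3 x).
Definition l3C (x : V3 CC) : CC := Csub (Cadd (v1 x) (v2 x)) (v3 x).
Definition linesC (x : V3 CC) : CC := Cmul (Cmul (l1C x) (l2C x)) (l3C x).

Definition l1R (x : V3 R) : R := - v1 x + v2 x + v3 x.
Definition l2R (x : V3 R) : R := v1 x - v2 x + v3 x.
Definition l3R (x : V3 R) : R := v1 x + v2 x - v3 x.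
Definition linesR (x : V3 R) : R := l1R x * l2R x * l3R x.

Definition hR (x : V3 R) : V3 R := mkV (v1 x * l1R x) (v2 x * l2R x) (v3 x * l3R x).
Definition gR (x : V3 R) : V3 R := mkV (v1 x * v1 x) (v2 x * v2 x) (v3 x * v3 x).
Definition fR (x : V3 R) : V3 R := gR (hR x).

Definition sw12 (x : V3 CC) : V3 CC := mkV (v2 x) (v1 x) (v3 x).
Definition sw13 (x : V3 CC) : V3 CC := mkV (v3 x) (v2 x) (v1 x).

Ltac V3_ring := intros;
  repeat match goal with x : V3 _ |- _ => destruct x end;
  unfold fmap, gmap, hmap, Cscale, sw12, sw13, V0, RtoV, fR, gR, hR, rhoC, rhoR, linesC, linesR,
    l1C, l2C, l3C, l1R, l2R, l3R in *; simpl;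
  rewrite ?RtoC_2; unfold C4, C2;
  first [ f_equal; ring | ring | f_equal; CC_componentwise | CC_componentwise ].

Lemma linesC_neq0 p : ~ onA1 p -> ~ onA2 p -> ~ onA3 p -> linesC p <> C0.
Proof.
  unfold onA1, onA2, onA3, onLine; intros N1 N2 N3 E.
  destruct (Cmul_eq0 _ _ E) as [E12 | E3]; [destruct (Cmul_eq0 _ _ E12) as [E1 | E2]|].
  - apply N1; rewrite <- E1; V3_ring.
  - apply N2; transitivity (Copp (l2C p)); [V3_ring | rewrite E2; ring].
  - apply N3; rewrite <- E3; V3_ring.
Qed.

Lemma hmap_RtoV x : hmap (RtoV x) = RtoV (hR x).
Proof. V3_ring. Qed.

Lemma fmap_RtoV x : fmap (RtoV x) = RtoV (fR x).
Proof. V3_ring. Qed.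

Lemma hmap_scale c x : hmap (Cscale c x) = Cscale (Cmul c c) (hmap x).
Proof. V3_ring. Qed.

Lemma fmap_scale c x : fmap (Cscale c x) = Cscale (Cmul (Cmul c c) (Cmul c c)) (fmap x).
Proof. V3_ring. Qed.

Lemma linesC_scale_RtoV c x :
  linesC (Cscale c (RtoV x)) = Cmul (Cmul c (Cmul c c)) (RtoC (linesR x)).
Proof. V3_ring. Qed.

Lemma hmap_hmap x : hmap (hmap x) = Cscale (linesC x) x.
Proof. V3_ring. Qed.

Lemma rhoR_fR x : rhoR (fR x) = rhoR x * (linesR x * linesR x).
Proof. V3_ring. Qed.

Lemma Cscale_C0 x : Cscale C0 x = V0.
Proof. V3_ring. Qed.

Lemma Cscale_C1 x : Cscale C1 x = x.
Proof. V3_ring. Qed.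

Lemma Cscale_Cscale a b x : Cscale a (Cscale b x) = Cscale (Cmul a b) x.
Proof. V3_ring. Qed.

Lemma V3cv_ext u w y : (forall n, u n = w n) -> V3cv w y -> V3cv u y.
Proof.
  intros E Hw; replace u with w by (apply functional_extensionality; intro; now rewrite E).
  exact Hw.
Qed.

Lemma V3cv_scale c u y : V3cv u y -> V3cv (fun n => Cscale c (u n)) (Cscale c y).
Proof. intros (H1 & H2 & H3); split; [|split]; simpl; Ccv_compute. Qed.

Section CoordinateSymmetry.

Variable sw : V3 CC -> V3 CC.
Hypothesis sw_invol : forall x, sw (sw x) = x.
Hypothesis sw_scale : forall c x, sw (Cscale c x) = Cscale c (sw x).

Lemma sw_V0 : sw V0 = V0.
Proof. rewrite <- (Cscale_C0 V0) at 1; rewrite sw_scale; apply Cscale_C0. Qed.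

Lemma sw_eq_V0 x : sw x = V0 -> x = V0.
Proof. intro E; rewrite <- (sw_invol x), E; exact sw_V0. Qed.

Lemma proj_eq_sw x y : proj_eq x y -> proj_eq (sw x) (sw y).
Proof. intros [c [Hc ->]]; exists c; split; [exact Hc | apply sw_scale]. Qed.

Hypothesis sw_rhoC : forall x, rhoC (sw x) = rhoC x.

Lemma inQ_sw_iff x : inQ (sw x) <-> inQ x.
Proof.
  unfold inQ; rewrite sw_rhoC; split; intros [Hx Hr]; split; try exact Hr; intro E.
  - apply Hx; rewrite E; exact sw_V0.
  - exact (Hx (sw_eq_V0 _ E)).
Qed.

Hypothesis sw_V3cv : forall u y, V3cv u y -> V3cv (fun n => sw (u n)) (sw y).

Lemma P2cv_sw u y : P2cv u y -> P2cv (fun n => sw (u n)) (sw y).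
Proof.
  intros (Hy & Hu & c & Hc & Hcv); split; [|split].
  - intro E; exact (Hy (sw_eq_V0 _ E)).
  - intros n E; exact (Hu n (sw_eq_V0 _ E)).
  - exists c; split; [exact Hc|].
    apply (V3cv_ext _ (fun n => sw (Cscale (c n) (u n)))); [intro; symmetry; apply sw_scale|].
    exact (sw_V3cv _ _ Hcv).
Qed.

Hypothesis sw_fmap : forall x, fmap (sw x) = sw (fmap x).
Hypothesis sw_inI : forall x, inI x -> inI (sw x).

Lemma limit_set_sw p y : limit_set p y -> limit_set (sw p) (sw y).
Proof.
  intros (u & Hu & Hup & Hfu); exists (fun n => sw (u n)); split; [|split].
  - intros n H; apply (Hu n); rewrite <- (sw_invol (u n)); exact (sw_inI _ H).
  - exact (P2cv_sw _ _ Hup).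
  - replace (fun n => fmap (sw (u n))) with (fun n => sw (fmap (u n)))
      by (apply functional_extensionality; intro; symmetry; apply sw_fmap).
    exact (P2cv_sw _ _ Hfu).
Qed.

Lemma limit_set_sw_iff p y : limit_set (sw p) y <-> limit_set p (sw y).
Proof.
  split; intro H.
  - rewrite <- (sw_invol p); exact (limit_set_sw _ _ H).
  - rewrite <- (sw_invol y); exact (limit_set_sw _ _ H).
Qed.

End CoordinateSymmetry.

Lemma sw12_invol x : sw12 (sw12 x) = x. Proof. now destruct x. Qed.
Lemma sw13_invol x : sw13 (sw13 x) = x. Proof. now destruct x. Qed.
Lemma sw12_scale c x : sw12 (Cscale c x) = Cscale c (sw12 x). Proof. now destruct x. Qed.
Lemma sw13_scale c x : sw13 (Cscale c x) = Cscale c (sw13 x). Proof. now destruct x. Qed.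
Lemma sw12_rhoC x : rhoC (sw12 x) = rhoC x. Proof. V3_ring. Qed.
Lemma sw13_rhoC x : rhoC (sw13 x) = rhoC x. Proof. V3_ring. Qed.
Lemma sw12_fmap x : fmap (sw12 x) = sw12 (fmap x). Proof. V3_ring. Qed.
Lemma sw13_fmap x : fmap (sw13 x) = sw13 (fmap x). Proof. V3_ring. Qed.

Lemma sw12_V3cv u y : V3cv u y -> V3cv (fun n => sw12 (u n)) (sw12 y).
Proof. intros (H1 & H2 & H3); split; [|split]; assumption. Qed.
Lemma sw13_V3cv u y : V3cv u y -> V3cv (fun n => sw13 (u n)) (sw13 y).
Proof. intros (H1 & H2 & H3); split; [|split]; assumption. Qed.

Lemma sw12_inI x : inI x -> inI (sw12 x).
Proof.
  pose proof (proj_eq_sw sw12 sw12_scale) as P.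
  intros [H | [H | H]]; [right; left | left | right; right]; exact (P _ _ H).
Qed.

Lemma sw13_inI x : inI x -> inI (sw13 x).
Proof.
  pose proof (proj_eq_sw sw13 sw13_scale) as P.
  intros [H | [H | H]]; [right; right | right; left | left]; exact (P _ _ H).
Qed.

Definition coord_prod (x : V3 CC) : CC := Cmul (v1 x) (Cmul (v2 x) (v3 x)).

(* Each factor satisfies [l_i(x)^2 = rho(x) + 4 x_j x_k], whence this splitting of [f]. *)
Lemma fmap_split x : let k := Cmul C4 (coord_prod x) in
  fmap x = mkV (Cadd (Cmul k (v1 x)) (Cmul (rhoC x) (Cmul (v1 x) (v1 x))))
               (Cadd (Cmul k (v2 x)) (Cmul (rhoC x) (Cmul (v2 x) (v2 x))))
               (Cadd (Cmul k (v3 x)) (Cmul (rhoC x) (Cmul (v3 x) (v3 x)))).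
Proof. unfold coord_prod; V3_ring. Qed.

Lemma fmap_inQ x : rhoC x = C0 -> fmap x = Cscale (Cmul C4 (coord_prod x)) x.
Proof. intro Hr; rewrite fmap_split, Hr; V3_ring. Qed.

Lemma inQ_v1_eq0 x : inQ x -> v1 x = C0 -> proj_eq a1 x.
Proof.
  destruct x as [x1 x2 x3]; intros [Hx Hr] E; simpl in E; subst x1.
  assert (Hsq : Cmul (Csub x3 x2) (Csub x3 x2) = C0) by (rewrite <- Hr; V3_ring).
  apply Csq_eq0, Csub_eq0 in Hsq; subst x3; exists x2; split.
  - intro E; subst x2; exact (Hx eq_refl).
  - unfold a1, Cscale; simpl; f_equal; ring.
Qed.

Lemma coord_prod_neq0 x : inQ x -> ~ inI x -> coord_prod x <> C0.
Proof.
  intros HQ HI E.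
  destruct (Cmul_eq0 _ _ E) as [E1 | E23]; [|destruct (Cmul_eq0 _ _ E23) as [E2 | E3]].
  - exact (HI (or_introl (inQ_v1_eq0 x HQ E1))).
  - apply HI; right; left; rewrite <- (sw12_invol x).
    apply (proj_eq_sw sw12 sw12_scale a1), inQ_v1_eq0; [|exact E2].
    exact (proj2 (inQ_sw_iff sw12 sw12_invol sw12_scale sw12_rhoC x) HQ).
  - apply HI; right; right; rewrite <- (sw13_invol x).
    apply (proj_eq_sw sw13 sw13_scale a1), inQ_v1_eq0; [|exact E3].
    exact (proj2 (inQ_sw_iff sw13 sw13_invol sw13_scale sw13_rhoC x) HQ).
Qed.

Lemma fmap_fixes_Q p : inQ p -> ~ inI p -> proj_eq p (fmap p).
Proof.
  intros HQ HI; exists (Cmul C4 (coord_prod p)); split.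
  - exact (Cmul_neq0 _ _ C4_neq0 (coord_prod_neq0 p HQ HI)).
  - exact (fmap_inQ p (proj2 HQ)).
Qed.

(* For [Y = f(V)] one has [rho(Y) = rho(V) (l1 l2 l3)^2] and [Y2 Y3 = (V2 V3 l2 l3)^2].  The
   resulting relation is bihomogeneous, hence survives rescaling and limits, and at [V = a1]
   it forces [rho(Y) = 0]. *)
Definition graph_relation (V Y : V3 CC) : CC :=
  Csub (Cmul (rhoC Y) (Cmul (Cmul (v2 V) (v2 V)) (Cmul (v3 V) (v3 V))))
       (Cmul (Cmul (rhoC V) (Cmul (l1C V) (l1C V))) (Cmul (v2 Y) (v3 Y))).

Lemma graph_relation_fmap c d x : graph_relation (Cscale d x) (Cscale c (fmap x)) = C0.
Proof. unfold graph_relation; V3_ring. Qed.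

Lemma graph_relation_cv V Y p y : V3cv V p -> V3cv Y y ->
  Ccv (fun n => graph_relation (V n) (Y n)) (graph_relation p y).
Proof.
  intros (HV1 & HV2 & HV3) (HY1 & HY2 & HY3); unfold graph_relation, rhoC, l1C; Ccv_compute.
Qed.

Lemma graph_relation_a1 k y :
  graph_relation (Cscale k a1) y = Cmul (rhoC y) (Cmul (Cmul k k) (Cmul k k)).
Proof. unfold graph_relation, a1; V3_ring. Qed.

Lemma limit_set_a1_inQ k y : k <> C0 -> limit_set (Cscale k a1) y -> inQ y.
Proof.
  intros Hk (u & _ & (_ & _ & d & _ & Hd) & (Hy & _ & c & _ & Hc)); split; [exact Hy|].
  assert (Hzero : graph_relation (Cscale k a1) y = C0).
  { apply (Ccv_unique _ _ _ (graph_relation_cv _ _ _ _ Hd Hc)).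
    apply (Ccv_ext _ (fun _ => C0)); [intro; apply graph_relation_fmap | apply Ccv_const]. }
  rewrite graph_relation_a1 in Hzero.
  destruct (Cmul_eq0 _ _ Hzero) as [Hr | Hk4]; [exact Hr|].
  exfalso; revert Hk4; repeat apply Cmul_neq0; exact Hk.
Qed.

Lemma inQ_param y : inQ y -> exists B C,
  v1 y = Cmul (Cadd B C) (Cadd B C) /\ v2 y = Cmul B B /\ v3 y = Cmul C C.
Proof.
  intros [_ Hr]; destruct (Csqrt_exists (v2 y)) as [B HB], (Csqrt_exists (v3 y)) as [C HC].
  destruct y as [y1 y2 y3]; simpl in *; subst y2 y3.
  (* [rho(y1, B^2, C^2) = (y1 - (B+C)^2) (y1 - (B-C)^2)] *)
  assert (Hfac : Cmul (Csub y1 (Cmul (Cadd B C) (Cadd B C)))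
                      (Csub y1 (Cmul (Csub B C) (Csub B C))) = C0)
    by (rewrite <- Hr; V3_ring).
  destruct (Cmul_eq0 _ _ Hfac) as [Hs | Hs]; apply Csub_eq0 in Hs.
  - exists B, C; repeat split; exact Hs.
  - exists B, (Copp C); repeat split; [rewrite Hs|]; ring.
Qed.

Definition a1_curve (B C t : CC) : V3 CC := mkV (Cadd B C) (Cadd t C) (Cadd t B).

Lemma fmap_a1_curve B C t : fmap (a1_curve B C t) = Cscale C4
  (mkV (Cmul (Cmul (Cadd B C) t) (Cmul (Cadd B C) t))
       (Cmul (Cmul B (Cadd t C)) (Cmul B (Cadd t C)))
       (Cmul (Cmul C (Cadd t B)) (Cmul C (Cadd t B)))).
Proof. unfold a1_curve; V3_ring. Qed.

Lemma a1_curve_notin_I B C t : Cadd t B <> C0 -> Cadd t C <> C0 -> ~ (B = C0 /\ C = C0) ->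
  ~ inI (a1_curve B C t).
Proof.
  intros HtB HtC HBC [(c & _ & E) | [(c & _ & E) | (c & _ & E)]];
    pose proof (f_equal v1 E) as E1; pose proof (f_equal v2 E) as E2;
    pose proof (f_equal v3 E) as E3; simpl in E1, E2, E3.
  - apply HBC; assert (EBC : C = B).
    { transitivity (Csub (Cadd t C) t); [ring|].
      rewrite E2, <- E3; unfold C1; ring. }
    subst C; enough (B = C0) by (split; assumption).
    apply (Cmul_reg_l C2 _ _ C2_neq0); transitivity (Cadd B B); [unfold C2; ring|].
    rewrite E1; ring.
  - apply HtC; rewrite E2; ring.
  - apply HtB; rewrite E3; ring.
Qed.

Lemma fmap_a1_curve_neq0 B C t : Cadd t B <> C0 -> Cadd t C <> C0 -> ~ (B = C0 /\ C = C0) ->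
  fmap (a1_curve B C t) <> V0.
Proof.
  intros HtB HtC HBC E; rewrite fmap_a1_curve in E; apply HBC.
  pose proof (f_equal v2 E) as E2; pose proof (f_equal v3 E) as E3.
  cbn [v2 v3 V0 Cscale] in E2, E3.
  destruct (Cmul_eq0 _ _ E2) as [E4 | E2']; [exfalso; exact (C4_neq0 E4)|].
  destruct (Cmul_eq0 _ _ E3) as [E4 | E3']; [exfalso; exact (C4_neq0 E4)|].
  destruct (Cmul_eq0 _ _ (Csq_eq0 _ E2')) as [EB | EC]; [|contradiction].
  destruct (Cmul_eq0 _ _ (Csq_eq0 _ E3')) as [EC | EB']; [|contradiction].
  split; assumption.
Qed.

Section A1Curve.

Variables (B C : CC) (t : nat -> CC).
Hypothesis t_neq0 : forall n, t n <> C0.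
Hypothesis t_inv_cv : Ccv (fun n => Cinv (t n)) C0.

Lemma a1_curve_cv : V3cv (fun n => Cscale (Cinv (t n)) (a1_curve B C (t n))) a1.
Proof.
  split; [|split].
  - apply (Ccv_ext _ (fun n => Cmul (Cinv (t n)) (Cadd B C))); [reflexivity|].
    eapply Ccv_eq_lim; [Ccv_compute | cbn; ring].
  - apply (Ccv_ext _ (fun n => Cadd C1 (Cmul (Cinv (t n)) C))).
    { intro n; cbn [v1 v2 v3 Cscale a1_curve]; field; apply t_neq0. }
    eapply Ccv_eq_lim; [Ccv_compute | cbn; ring].
  - apply (Ccv_ext _ (fun n => Cadd C1 (Cmul (Cinv (t n)) B))).
    { intro n; cbn [v1 v2 v3 Cscale a1_curve]; field; apply t_neq0. }
    eapply Ccv_eq_lim; [Ccv_compute | cbn; ring].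
Qed.

Lemma fmap_a1_curve_cv :
  V3cv (fun n => Cscale (Cinv (Cmul C4 (Cmul (t n) (t n)))) (fmap (a1_curve B C (t n))))
       (mkV (Cmul (Cadd B C) (Cadd B C)) (Cmul B B) (Cmul C C)).
Proof.
  pose proof C4_neq0.
  split; [|split].
  - apply (Ccv_ext _ (fun _ => Cmul (Cadd B C) (Cadd B C))); [|apply Ccv_const].
    intro n; rewrite fmap_a1_curve; cbn [v1 v2 v3 Cscale].
    field; split; [apply t_neq0 | assumption].
  - apply (Ccv_ext _ (fun n => Cmul (Cmul B B)
      (Cmul (Cadd C1 (Cmul (Cinv (t n)) C)) (Cadd C1 (Cmul (Cinv (t n)) C))))).
    { intro n; rewrite fmap_a1_curve; cbn [v1 v2 v3 Cscale].
      field; split; [apply t_neq0 | assumption]. }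
    eapply Ccv_eq_lim; [Ccv_compute | cbn; ring].
  - apply (Ccv_ext _ (fun n => Cmul (Cmul C C)
      (Cmul (Cadd C1 (Cmul (Cinv (t n)) B)) (Cadd C1 (Cmul (Cinv (t n)) B))))).
    { intro n; rewrite fmap_a1_curve; cbn [v1 v2 v3 Cscale].
      field; split; [apply t_neq0 | assumption]. }
    eapply Ccv_eq_lim; [Ccv_compute | cbn; ring].
Qed.

End A1Curve.

Lemma inv_INR_shift_cv (K : R) : 0 <= K -> Un_cv (fun n => / (INR n + K)) 0.
Proof.
  intro HK; apply (cv_infty_cv_0 (fun n => INR n + K)); intro M.
  destruct (INR_unbounded M) as [N HN]; exists N; intros n Hn.
  pose proof (le_INR _ _ Hn); lra.
Qed.

Lemma seq_to_infinity_avoiding (B C : CC) : exists t : nat -> CC,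
  (forall n, t n <> C0) /\ (forall n, Cadd (t n) B <> C0) /\ (forall n, Cadd (t n) C <> C0) /\
  Ccv (fun n => Cinv (t n)) C0.
Proof.
  set (K := Rabs (Re B) + Rabs (Re C) + 1).
  assert (HK : - Re B + 1 <= K /\ - Re C + 1 <= K /\ 1 <= K).
  { pose proof (Rle_abs (- Re B)); pose proof (Rle_abs (- Re C)).
    pose proof (Rabs_pos (Re B)); pose proof (Rabs_pos (Re C)).
    rewrite Rabs_Ropp in *; unfold K; lra. }
  clearbody K; exists (fun n => RtoC (INR n + K)).
  assert (Ht : forall n, 0 < INR n + K) by (intro n; pose proof (pos_INR n); lra).
  split; [|split; [|split]].
  - intro n; apply RtoC_neq0; specialize (Ht n); lra.
  - intros n E; apply (f_equal Re) in E; simpl in E; pose proof (pos_INR n); lra.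
  - intros n E; apply (f_equal Re) in E; simpl in E; pose proof (pos_INR n); lra.
  - apply (Ccv_ext _ (fun n => RtoC (/ (INR n + K)))).
    + intro n; apply RtoC_inv; specialize (Ht n); lra.
    + apply Ccv_RtoC, inv_INR_shift_cv; lra.
Qed.

Lemma limit_set_a1_of_inQ k y : k <> C0 -> inQ y -> limit_set (Cscale k a1) y.
Proof.
  intros Hk HQ; destruct (inQ_param y HQ) as (B & C & Hy1 & Hy2 & Hy3).
  destruct (seq_to_infinity_avoiding B C) as (t & Ht0 & HtB & HtC & Hinv).
  assert (HBC : ~ (B = C0 /\ C = C0)).
  { intros [-> ->]; apply (proj1 HQ); destruct y; simpl in *; subst; V3_ring. }
  exists (fun n => a1_curve B C (t n)); split; [|split].
  - intro n; exact (a1_curve_notin_I B C (t n) (HtB n) (HtC n) HBC).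
  - split; [|split].
    + intro E; apply Hk; apply (f_equal v2) in E; simpl in E; rewrite <- E; ring.
    + intros n E; apply (HtC n), (f_equal v2 E).
    + exists (fun n => Cmul k (Cinv (t n))); split.
      * intro n; exact (Cmul_neq0 _ _ Hk (Cinv_neq0 _ (Ht0 n))).
      * apply (V3cv_ext _ (fun n => Cscale k (Cscale (Cinv (t n)) (a1_curve B C (t n))))).
        { intro n; symmetry; apply Cscale_Cscale. }
        exact (V3cv_scale k _ _ (a1_curve_cv B C t Ht0 Hinv)).
  - split; [|split].
    + exact (proj1 HQ).
    + intro n; exact (fmap_a1_curve_neq0 B C (t n) (HtB n) (HtC n) HBC).
    + exists (fun n => Cinv (Cmul C4 (Cmul (t n) (t n)))); split.
      * intro n; apply Cinv_neq0, Cmul_neq0; [exact C4_neq0|].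
        exact (Cmul_neq0 _ _ (Ht0 n) (Ht0 n)).
      * replace y with (mkV (Cmul (Cadd B C) (Cadd B C)) (Cmul B B) (Cmul C C))
          by (destruct y; simpl in *; congruence).
        exact (fmap_a1_curve_cv B C t Ht0 Hinv).
Qed.

Lemma limit_set_a1 k y : k <> C0 -> (limit_set (Cscale k a1) y <-> inQ y).
Proof.
  intro Hk; split; [apply limit_set_a1_inQ | apply limit_set_a1_of_inQ]; exact Hk.
Qed.

Lemma limit_set_I p : inI p -> forall y, limit_set p y <-> inQ y.
Proof.
  intros [(k & Hk & ->) | [(k & Hk & ->) | (k & Hk & ->)]] y.
  - exact (limit_set_a1 k y Hk).
  - change (Cscale k a2) with (sw12 (Cscale k a1)).
    rewrite (limit_set_sw_iff sw12 sw12_invol sw12_scale sw12_V3cv sw12_fmap sw12_inI),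
      (limit_set_a1 _ _ Hk).
    exact (inQ_sw_iff sw12 sw12_invol sw12_scale sw12_rhoC y).
  - change (Cscale k a3) with (sw13 (Cscale k a1)).
    rewrite (limit_set_sw_iff sw13 sw13_invol sw13_scale sw13_V3cv sw13_fmap sw13_inI),
      (limit_set_a1 _ _ Hk).
    exact (inQ_sw_iff sw13 sw13_invol sw13_scale sw13_rhoC y).
Qed.

Lemma rhoR_neg_neq0 x : rhoR x < 0 -> x <> mkV 0 0 0.
Proof. intros H ->; unfold rhoR in H; simpl in H; lra. Qed.

(* [rho(y) = (y1 + y2 - y3)^2 - 4 y1 y2], and symmetrically in [y2, y3]. *)
Lemma rhoR_neg_same_sign y : rhoR y < 0 -> 0 < v1 y * v2 y /\ 0 < v1 y * v3 y.
Proof.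
  destruct y as [y1 y2 y3]; unfold rhoR; simpl; intro H; split.
  - pose proof (pow2_ge_0 (y1 + y2 - y3)); nra.
  - pose proof (pow2_ge_0 (y1 + y3 - y2)); nra.
Qed.

Lemma RtoV_proportional a b s : s <> C0 -> v1 b <> 0 -> RtoV a = Cscale s (RtoV b) ->
  exists t, t <> 0 /\ rhoR a = t * t * rhoR b.
Proof.
  destruct a as [a1 a2 a3], b as [b1 b2 b3], s as [sr si]; simpl; intros Hs Hb E.
  injection E as E1r E1i E2r E2i E3r E3i.
  assert (Hsi : si = 0) by (apply (Rmult_eq_reg_r b1); [lra | exact Hb]).
  subst si; exists sr; split.
  - intro Hsr; subst sr; exact (Hs eq_refl).
  - unfold rhoR; simpl; rewrite E1r, E2r, E3r; ring.
Qed.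

Lemma inU_fmap p : linesC p <> C0 -> inU p -> inU (fmap p).
Proof.
  intros HL (x & _ & (c & Hc & ->) & Hx).
  assert (HLx : linesR x <> 0).
  { intro E; apply HL; rewrite linesC_scale_RtoV, E; change (RtoC 0) with C0; ring. }
  assert (Hf : rhoR (fR x) < 0).
  { rewrite rhoR_fR; pose proof (Rsqr_pos_lt _ HLx); unfold Rsqr in *; nra. }
  exists (fR x); split; [exact (rhoR_neg_neq0 _ Hf) | split; [|exact Hf]].
  exists (Cmul (Cmul c c) (Cmul c c)); split.
  - repeat apply Cmul_neq0; exact Hc.
  - rewrite fmap_scale, fmap_RtoV; reflexivity.
Qed.

(* The coordinates of [h(p)] square to the real numbers [c y_i] of a common sign, so their
   ratios are real. *)
Lemma hmap_real_of_fmap_real p c y : c <> C0 -> rhoR y < 0 -> fmap p = Cscale c (RtoV y) ->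
  v1 (hmap p) <> C0 /\ exists r, hmap p = Cscale (v1 (hmap p)) (RtoV r).
Proof.
  intros Hc Hy E; destruct (rhoR_neg_same_sign y Hy) as [H12 H13].
  set (w := hmap p) in *.
  assert (E1 : Cmul (v1 w) (v1 w) = Cmul c (RtoC (v1 y))) by exact (f_equal v1 E).
  assert (E2 : Cmul (v2 w) (v2 w) = Cmul c (RtoC (v2 y))) by exact (f_equal v2 E).
  assert (E3 : Cmul (v3 w) (v3 w) = Cmul c (RtoC (v3 y))) by exact (f_equal v3 E).
  assert (Hw1 : v1 w <> C0).
  { intro E0; rewrite E0 in E1; apply (Cmul_neq0 c (RtoC (v1 y)) Hc).
    - apply RtoC_neq0; intro Hy1; rewrite Hy1 in H12; lra.
    - rewrite <- E1; ring. }
  split; [exact Hw1|].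
  exists (mkV 1 (Re (Cdiv (v2 w) (v1 w))) (Re (Cdiv (v3 w) (v1 w)))).
  unfold Cscale, RtoV; cbn [v1 v2 v3].
  rewrite <- (Csq_ratio_real (v2 w) (v1 w) c (v2 y) (v1 y)) by (nra || assumption).
  rewrite <- (Csq_ratio_real (v3 w) (v1 w) c (v3 y) (v1 y)) by (nra || assumption).
  clearbody w; destruct w as [w1 w2 w3]; cbn; f_equal; change (RtoC 1) with C1; ring.
Qed.

Lemma proj_real_of_fmap_real p c y : linesC p <> C0 -> c <> C0 -> rhoR y < 0 ->
  fmap p = Cscale c (RtoV y) -> exists k q, k <> C0 /\ p = Cscale k (RtoV q).
Proof.
  intros HL Hc Hy E.
  destruct (hmap_real_of_fmap_real p c y Hc Hy E) as [HW [r Er]].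
  set (W := v1 (hmap p)) in *.
  exists (Cmul (Cinv (linesC p)) (Cmul W W)), (hR r); split.
  - exact (Cmul_neq0 _ _ (Cinv_neq0 _ HL) (Cmul_neq0 _ _ HW HW)).
  - assert (Hpp : hmap (hmap p) = Cscale (linesC p) p) by apply hmap_hmap.
    rewrite Er, hmap_scale, hmap_RtoV in Hpp.
    rewrite <- Cscale_Cscale, Hpp, Cscale_Cscale.
    replace (Cmul (Cinv (linesC p)) (linesC p)) with C1 by (field; exact HL).
    symmetry; apply Cscale_C1.
Qed.

Lemma rhoR_neg_of_fmap_real q k c y : k <> C0 -> c <> C0 -> rhoR y < 0 ->
  fmap (Cscale k (RtoV q)) = Cscale c (RtoV y) -> rhoR q < 0.
Proof.
  intros Hk Hc Hy E; rewrite fmap_scale, fmap_RtoV in E.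
  set (k4 := Cmul (Cmul k k) (Cmul k k)) in E.
  assert (Hk4 : k4 <> C0) by (unfold k4; repeat apply Cmul_neq0; exact Hk).
  assert (Ef : RtoV (fR q) = Cscale (Cmul (Cinv k4) c) (RtoV y)).
  { rewrite <- Cscale_Cscale, <- E, Cscale_Cscale.
    replace (Cmul (Cinv k4) k4) with C1 by (field; exact Hk4).
    symmetry; apply Cscale_C1. }
  assert (Hy1 : v1 y <> 0).
  { intro Hy1; destruct (rhoR_neg_same_sign y Hy) as [H12 _]; rewrite Hy1 in H12; lra. }
  destruct (RtoV_proportional _ _ _ (Cmul_neq0 _ _ (Cinv_neq0 _ Hk4) Hc) Hy1 Ef) as (t & Ht & Hrho).
  rewrite rhoR_fR in Hrho.
  pose proof (Rsqr_pos_lt _ Ht); pose proof (pow2_ge_0 (linesR q)); unfold Rsqr in *; nra.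
Qed.

Lemma inU_of_inU_fmap p : linesC p <> C0 -> inU (fmap p) -> inU p.
Proof.
  intros HL (y & _ & (c & Hc & E) & Hy).
  destruct (proj_real_of_fmap_real p c y HL Hc Hy E) as (k & q & Hk & ->).
  pose proof (rhoR_neg_of_fmap_real q k c y Hk Hc Hy E) as Hq.
  exists q; split; [exact (rhoR_neg_neq0 q Hq) | split; [|exact Hq]].
  exists k; split; [exact Hk | reflexivity].
Qed.

Theorem mainTheorem15 :
  (forall p : V3 CC, inI p ->
     forall y : V3 CC, limit_set p y <-> inQ y) /\
  (forall p : V3 CC, inQ p -> ~ inI p -> proj_eq p (fmap p)) /\
  (forall p : V3 CC, p <> V0 -> ~ onA1 p -> ~ onA2 p -> ~ onA3 p ->
     (inU p <-> inU (fmap p))).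
Proof.
  split; [exact limit_set_I | split; [exact fmap_fixes_Q |]].
  intros p _ N1 N2 N3; pose proof (linesC_neq0 p N1 N2 N3) as HL.
  split; [exact (inU_fmap p HL) | exact (inU_of_inU_fmap p HL)].
Qed.
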